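(* Let $A\in\mathbb R^{n\times n}$ be symmetric with bandwidth $b$, where $1<b<n$, let $Q\in\mathbb R^{2n\times 2n}$ be the orthogonal matrix produced by Algorithm 2 (described in the context) applied to $A$, and set $Q_1=Q(1{:}n,1{:}n)$, $Q_2=Q(n{+}1{:}2n,1{:}n)$. Then for every $1\le k<n$, both $(Q_1Q_2^{T})(1{:}k,\,k{+}1{:}n)$ and $(Q_1Q_2^{T})(k{+}1{:}n,\,1{:}k)$ have rank at most $2b$.
   Context: A matrix has bandwidth $b$ if its $(i,j)$ entry vanishes whenever $|i-j|>b$. A Givens rotation on rows $p\ne q$ is an orthogonal matrix $G\in\mathbb R^{2n\times 2n}$ equal to the identity except in the entries $(p,p),(p,q),(q,p),(q,q)$, which form a $2\times2$ rotation $\begin{bmatrix}c&s\\-s&c\end{bmatrix}$, $c^2+s^2=1$. ''Rotate rows $p,q$ to annihilate $R(q,j)$'' means: choose such a $G$ for which $(G^{T}R)(q,j)=0$ and then update $R\leftarrow G^{T}R$, $Q\leftarrow QG$. Algorithm 2: Initialize $Q=I_{2n}$, $R=\begin{bmatrix}A\\ I_n\end{bmatrix}\in\mathbb R^{2n\times n}$. First rotate rows $1,n+1$ to annihilate $R(n+1,1)$; then for $j=2,\dots,\min\{n,b+1\}$ rotate rows $1,j$ to annihilate $R(j,1)$. Then for $i=2,\dots,n$: (a) rotate rows $n+1,n+i$ to annihilate $R(n+i,i)$; (b) for $j=i+1,\dots,\min\{n,b+i-1\}$, rotate rows $n+j,n+i$ to annihilate $R(n+i,j)$; (c) rotate rows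 $i,n+1$ to annihilate $R(n+1,i)$; (d) if $i<n$, for $j=i+1,\dots,\min\{n,b+i\}$ rotate rows $i,j$ to annihilate $R(j,i)$. On output $QR=\begin{bmatrix}A\\ I\end{bmatrix}$ with $R$ upper triangular. Notation $M(a{:}b,c{:}d)$ denotes the submatrix with rows $a,\dots,b$ and columns $c,\dots,d$. *)

From HB Require Import structures.
From mathcomp Require Import all_boot all_order all_algebra.
Set Implicit Arguments. Unset Strict Implicit. Unset Printing Implicit Defensive.
Import Order.TTheory GRing.Theory Num.Theory.
Local Open Scope ring_scope.

(* Entry of a matrix addressed by 0-based natural indices (0 if out of range). *)
Definition mxe (F : nmodType) (m n : nat) (M : 'M[F]_(m, n)) (i j : nat) : F :=
  match @insub _ (fun k => k < m)%N _ i, @insub _ (fun k => k < n)%N _ j with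
  | Some i', Some j' => M i' j'
  | _, _ => 0
  end.

(* The paper's submatrix M(a:b, c:d), with 1-based inclusive indices. *)
Definition subblock (F : nmodType) (m n : nat) (M : 'M[F]_(m, n)) (a b c d : nat)
  : 'M[F]_(b - a + 1, d - c + 1) :=
  \matrix_(i < b - a + 1, j < d - c + 1) mxe M (a - 1 + i) (c - 1 + j).

Definition has_bandwidth (F : nmodType) (n : nat) (b : nat) (A : 'M[F]_n) : Prop :=
  forall i j : 'I_n, (i + b < j)%N || (j + b < i)%N -> A i j = 0.

Definition givens (F : pzRingType) (N : nat) (p q : nat) (c s : F) : 'M[F]_N :=
  \matrix_(i < N, j < N)
    if (i == p.-1 :> nat) && (j == p.-1 :> nat) then c
    else if (i == p.-1 :> nat) && (j == q.-1 :> nat) then s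
    else if (i == q.-1 :> nat) && (j == p.-1 :> nat) then - s
    else if (i == q.-1 :> nat) && (j == q.-1 :> nat) then c
    else (i == j)%:R.

(* "Rotate rows p, q to annihilate R(q, col)" (1-based indices):
   choose a Givens rotation G on rows p <> q with (G^T R)(q, col) = 0,
   then R <- G^T R and Q <- Q G. *)
Definition givens_step (F : pzRingType) (N n : nat) (p q col : nat)
    (Q : 'M[F]_N) (R : 'M[F]_(N, n)) (Q' : 'M[F]_N) (R' : 'M[F]_(N, n)) : Prop :=
  [/\ (0 < p <= N)%N, (0 < q <= N)%N, (0 < col <= n)%N, p != q &
  exists c s : F, [/\ c ^+ 2 + s ^+ 2 = 1,
    mxe ((givens N p q c s)^T *m R) q.-1 col.-1 = 0,
    R' = (givens N p q c s)^T *m R &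
    Q' = Q *m givens N p q c s]].

Fixpoint givens_run (F : pzRingType) (N n : nat) (steps : seq (nat * nat * nat))
    (Q : 'M[F]_N) (R : 'M[F]_(N, n)) (Q' : 'M[F]_N) (R' : 'M[F]_(N, n)) : Prop :=
  match steps with
  | [::] => Q' = Q /\ R' = R
  | (p, q, col) :: st =>
      exists (Qm : 'M[F]_N) (Rm : 'M[F]_(N, n)),
        givens_step p q col Q R Qm Rm /\ givens_run st Qm Rm Q' R'
  end.

(* The sequence of rotations of Algorithm 2 (1-based indices). *)
Definition algo2_stage (n b i : nat) : seq (nat * nat * nat) :=
  [:: (n + 1, n + i, i)]%N
  ++ [seq (n + j, n + i, j)%N | j <- iota i.+1 (minn n (b + i - 1) - i)]
  ++ [:: (i, n + 1, i)]%N
  ++ (if (i < n)%N then [seq (i, j, i) | j <- iota i.+1 (minn n (b + i) - i)]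
      else [::]).

Definition algo2_steps (n b : nat) : seq (nat * nat * nat) :=
  [:: (1, n + 1, 1)]%N
  ++ [seq (1, j, 1)%N | j <- iota 2 (minn n b.+1 - 1)]
  ++ flatten [seq algo2_stage n b i | i <- iota 2 (n - 1)].

Definition algo2_output (F : pzRingType) (n b : nat) (A : 'M[F]_n)
    (Q : 'M[F]_(n + n)) (R : 'M[F]_(n + n, n)) : Prop :=
  givens_run (algo2_steps n b) 1%:M (col_mx A 1%:M) Q R.

(* Algorithm 2 ends with R = [R1; 0]: tracking which entries of R can be
   nonzero through every rotation shows that the identity block is fully
   annihilated.  From Q [R1; 0] = [A; I] and Q^T Q = I we get Q2 R1 = I,
   Q1 = A Q2 and R1^T R1 = A^2 + I, so X := Q1 Q2^T = A Y with
   Y := Q2 Q2^T = (A^2 + I)^-1.  Thus [X Y; -Y X] is the inverse of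
   [A -I; I A], and by the nullity theorem the block of the former on rows
   {1..k, n+1..n+k} and columns {k+1..n, n+k+1..2n}, which contains
   X(1:k, k+1:n), has rank at most that of the same block [A12 0; 0 A12] of
   the latter, i.e. at most 2b.  X is symmetric, which handles the other
   block. *)

From HB Require Import structures.
From mathcomp Require Import all_boot all_order all_algebra.
From mathcomp Require Import zify ring.
Set Implicit Arguments. Unset Strict Implicit. Unset Printing Implicit Defensive.
Import Order.TTheory GRing.Theory Num.Theory.
Local Open Scope ring_scope.

Section Entries.
Variable F : nmodType.

Lemma mxeE m n (M : 'M[F]_(m, n)) (i : 'I_m) (j : 'I_n) : mxe M i j = M i j.
Proof. by rewrite /mxe !valK. Qed.

Lemma mxe_out m n (M : 'M[F]_(m, n)) r c : (m <= r)%N || (n <= c)%N -> mxe M r c = 0.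
Proof.
rewrite /mxe; case/orP=> H; first by rewrite insubF // ltnNge H.
by case: insub => // i; rewrite insubF // ltnNge H.
Qed.

Lemma mxe_inE m n (M : 'M[F]_(m, n)) r c (hr : (r < m)%N) (hc : (c < n)%N) :
  mxe M r c = M (Ordinal hr) (Ordinal hc).
Proof. exact: (mxeE M (Ordinal hr) (Ordinal hc)). Qed.

Lemma mxe_tr m n (M : 'M[F]_(m, n)) r c : mxe M^T r c = mxe M c r.
Proof.
case: (ltnP r n) => hr; last by rewrite !mxe_out ?hr ?orbT.
case: (ltnP c m) => hc; last by rewrite !mxe_out ?hc ?orbT.
by rewrite (mxe_inE _ hr hc) (mxe_inE _ hc hr) mxE.
Qed.

Lemma mxe_col_mx m1 m2 n (A : 'M[F]_(m1, n)) (B : 'M[F]_(m2, n)) r c :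
  mxe (col_mx A B) r c = if (r < m1)%N then mxe A r c else mxe B (r - m1) c.
Proof.
case: (ltnP c n) => hc; last by rewrite !mxe_out ?hc ?orbT //; case: ifP.
case: (ltnP r (m1 + m2)) => hr; last first.
  rewrite mxe_out ?hr //; case: ifP => h; first lia.
  by rewrite mxe_out //; apply/orP; left; lia.
case: ifP => h.
  rewrite (mxe_inE _ hr hc) (mxe_inE _ h hc).
  have -> : Ordinal hr = lshift m2 (Ordinal h) by apply: val_inj.
  by rewrite col_mxEu.
have h' : (r - m1 < m2)%N by lia.
rewrite (mxe_inE _ hr hc) (mxe_inE _ h' hc).
have -> : Ordinal hr = rshift m1 (Ordinal h') by apply: val_inj => /=; lia.
by rewrite col_mxEd.
Qed.

Lemma mxe_band n b (A : 'M[F]_n) r c :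
  has_bandwidth b A -> ((r + b < c) || (c + b < r))%N -> mxe A r c = 0.
Proof.
move=> Ab rc; case: (ltnP r n) => hr; last by rewrite mxe_out ?hr.
case: (ltnP c n) => hc; last by rewrite mxe_out ?hc ?orbT.
by rewrite (mxe_inE _ hr hc) Ab.
Qed.

End Entries.

Lemma mxe1 (F : pzRingType) n r c :
  mxe (1%:M : 'M[F]_n) r c = ((r == c) && (r < n)%N)%:R.
Proof.
case: (ltnP c n) => hc; last first.
  by rewrite mxe_out ?hc ?orbT //; case: eqP => //= ->; rewrite ltnNge hc.
case: (ltnP r n) => hr; last by rewrite mxe_out ?hr // andbF.
by rewrite (mxe_inE _ hr hc) mxE andbT.
Qed.

Section Givens.
Variable F : comPzRingType.

Lemma givens_trmx_mulE N n p q (c s : F) (R : 'M[F]_(N, n)) (r : 'I_N) (j : 'I_n)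
    (hp : (p.-1 < N)%N) (hq : (q.-1 < N)%N) :
  p.-1 != q.-1 ->
  ((givens N p q c s)^T *m R) r j =
  if r == p.-1 :> nat then c * R (Ordinal hp) j - s * R (Ordinal hq) j
  else if r == q.-1 :> nat then s * R (Ordinal hp) j + c * R (Ordinal hq) j
  else R r j.
Proof.
move=> npq; have nPQ : Ordinal hp != Ordinal hq by [].
rewrite mxE (bigD1 (Ordinal hp)) //= (bigD1 (Ordinal hq)) 1?eq_sym //=.
rewrite (eq_bigr (fun l => (l == r)%:R * R l j)); last first.
  move=> l /andP[lp lq]; rewrite !mxE.
  by rewrite -!val_eqE /= in lp lq; rewrite (negbTE lp) (negbTE lq) eq_sym.
have rest : \sum_(l | (l != Ordinal hp) && (l != Ordinal hq)) (l == r)%:R * R l j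
    = if (r != Ordinal hp) && (r != Ordinal hq) then R r j else 0.
  case: ifP => [rPQ|nrPQ].
    rewrite (bigD1 r) //= eqxx mul1r big1 ?addr0 // => l /andP[_ /negbTE ->].
    by rewrite mul0r.
  rewrite big1 // => l /andP[lp lq]; case: eqP => [lr|_]; last by rewrite mul0r.
  by move: nrPQ; rewrite -lr lp lq.
rewrite rest !mxE /= !eqxx (negbTE npq) [q.-1 == _]eq_sym (negbTE npq) /=.
rewrite -!val_eqE /= ![_ == r :> nat]eq_sym.
case: (eqVneq (r : nat) p.-1) => [rp|rp] /=; first by rewrite mulNr addr0.
case: (eqVneq (r : nat) q.-1) => [rq|rq] /=; first by rewrite addr0.
by rewrite !mul0r !add0r.
Qed.

Lemma givens_orthogonal N p q (c s : F) :
  (0 < p <= N)%N -> (0 < q <= N)%N -> p != q -> c ^+ 2 + s ^+ 2 = 1 ->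
  (givens N p q c s)^T *m givens N p q c s = 1%:M.
Proof.
move=> Hp Hq npq cs.
have hp : (p.-1 < N)%N by lia.
have hq : (q.-1 < N)%N by lia.
have nPQ : p.-1 != q.-1 by lia.
apply/matrixP => r j; rewrite (givens_trmx_mulE _ _ _ _ _ hp hq) // !mxE /=.
rewrite !eqxx (negbTE nPQ) [q.-1 == _]eq_sym (negbTE nPQ) /= -!val_eqE /=.
rewrite ![_ == j :> nat]eq_sym.
case: (eqVneq (r:nat) p.-1) => Ep; case: (eqVneq (r:nat) q.-1) => Eq;
case: (eqVneq (j:nat) p.-1) => Ej; case: (eqVneq (j:nat) q.-1) => Ejq;
case: (eqVneq (r:nat) j) => Erj; rewrite /= ?mulr1n ?mulr0n; try lia;
first [ rewrite -cs; ring | ring ].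
Qed.

End Givens.

Section Steps.
Variable F : comUnitRingType.

Lemma givens_step_mulmx N n p q col (Q Q' : 'M[F]_N) (R R' : 'M[F]_(N, n)) :
  givens_step p q col Q R Q' R' -> Q' *m R' = Q *m R.
Proof.
case=> Hp Hq _ npq [c [s [cs _ -> ->]]].
have GGt := mulmx1C (givens_orthogonal Hp Hq npq cs).
by rewrite -mulmxA (mulmxA (givens N p q c s)) GGt mul1mx.
Qed.

Lemma givens_step_orthogonal N n p q col (Q Q' : 'M[F]_N) (R R' : 'M[F]_(N, n)) :
  givens_step p q col Q R Q' R' -> Q^T *m Q = 1%:M -> Q'^T *m Q' = 1%:M.
Proof.
case=> Hp Hq _ npq [c [s [cs _ _ ->]]] QtQ.
by rewrite trmx_mul -mulmxA (mulmxA Q^T) QtQ mul1mx givens_orthogonal.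
Qed.

Definition support_in m n (R : 'M[F]_(m, n)) (P : nat -> nat -> bool) :=
  forall r c, ~~ P r c -> mxe R r c = 0.

Lemma support_in_sub m n (R : 'M[F]_(m, n)) (P P' : nat -> nat -> bool) :
  support_in R P -> (forall r c, (c < n)%N -> ~~ P' r c -> ~~ P r c) -> support_in R P'.
Proof.
move=> RP PP' r c; case: (ltnP c n) => hc; first by move/(PP' _ _ hc)/RP.
by rewrite mxe_out // hc orbT.
Qed.

(* A rotation on rows p, q changes only those two rows, keeps a column zero
   where both rows vanish, and clears the targeted entry R(q, col). *)
Lemma givens_step_support N n p q col (Q Q' : 'M[F]_N) (R R' : 'M[F]_(N, n))
    (P P' : nat -> nat -> bool) :
  givens_step p q col Q R Q' R' -> support_in R P ->
  (forall r c, r != p.-1 -> r != q.-1 -> ~~ P' r c -> ~~ P r c) ->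
  (forall c, ~~ P' p.-1 c -> ~~ P p.-1 c && ~~ P q.-1 c) ->
  (forall c, c != col.-1 -> ~~ P' q.-1 c -> ~~ P p.-1 c && ~~ P q.-1 c) ->
  support_in R' P'.
Proof.
case=> Hp Hq _ npq [c [s [_ Hz ER _]]] RP other rowp rowq r j NP'.
have hp : (p.-1 < N)%N by lia.
have hq : (q.-1 < N)%N by lia.
have nPQ : p.-1 != q.-1 by lia.
case: (ltnP j n) => hj; last by rewrite mxe_out ?hj ?orbT.
have rotE r0 (hr0 : (r0 < N)%N) : mxe R' r0 j =
    if r0 == p.-1 then c * mxe R p.-1 j - s * mxe R q.-1 j
    else if r0 == q.-1 then s * mxe R p.-1 j + c * mxe R q.-1 j
    else mxe R r0 j.
  by rewrite ER !(mxe_inE _ _ hj) (givens_trmx_mulE _ _ _ _ _ hp hq).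
have pq_zero : ~~ P p.-1 j && ~~ P q.-1 j ->
    mxe R' p.-1 j = 0 /\ mxe R' q.-1 j = 0.
  case/andP=> /RP Rp /RP Rq.
  by rewrite !rotE // !eqxx [q.-1 == _]eq_sym (negbTE nPQ) Rp Rq !mulr0 subr0 addr0.
case: (eqVneq r p.-1) NP' => [->|rp] NP'; first by case: (pq_zero (rowp _ NP')).
case: (eqVneq r q.-1) NP' => [->|rq] NP'.
  case: (eqVneq j col.-1) NP' => [->|jc] NP'; first by rewrite ER.
  by case: (pq_zero (rowq _ jc NP')).
case: (ltnP r N) => hr; last by rewrite mxe_out ?hr.
by rewrite rotE // (negbTE rp) (negbTE rq) RP // other.
Qed.

Lemma givens_run_cat N n s1 s2 (Q Q' : 'M[F]_N) (R R' : 'M[F]_(N, n)) :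
  givens_run (s1 ++ s2) Q R Q' R' ->
  exists Qm Rm, givens_run s1 Q R Qm Rm /\ givens_run s2 Qm Rm Q' R'.
Proof.
elim: s1 Q R => [|[[p q] col] s1 IH] Q R /=; first by exists Q, R.
case=> Qm [Rm [step /IH [Q2 [R2 [run1 run2]]]]].
by exists Q2, R2; split => //; exists Qm, Rm.
Qed.

Lemma givens_run1 N n p q col (Q Q' : 'M[F]_N) (R R' : 'M[F]_(N, n)) :
  givens_run [:: (p, q, col)] Q R Q' R' -> givens_step p q col Q R Q' R'.
Proof. by case=> Qm [Rm [step [-> ->]]]. Qed.

Lemma givens_run_mulmx N n st (Q Q' : 'M[F]_N) (R R' : 'M[F]_(N, n)) :
  givens_run st Q R Q' R' -> Q' *m R' = Q *m R.
Proof.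
elim: st Q R => [|[[p q] col] st IH] Q R /=; first by case=> -> ->.
by case=> Qm [Rm [/givens_step_mulmx <- /IH]].
Qed.

Lemma givens_run_orthogonal N n st (Q Q' : 'M[F]_N) (R R' : 'M[F]_(N, n)) :
  givens_run st Q R Q' R' -> Q^T *m Q = 1%:M -> Q'^T *m Q' = 1%:M.
Proof.
elim: st Q R => [|[[p q] col] st IH] Q R /=; first by case=> ->.
by case=> Qm [Rm [/givens_step_orthogonal QQm /IH QmQ']] /QQm.
Qed.

Lemma givens_run_flatten_ind N n (stage : nat -> seq (nat * nat * nat))
    (Inv : nat -> 'M[F]_(N, n) -> Prop) i0 len (Q Q' : 'M[F]_N) (R R' : 'M[F]_(N, n)) :
  (forall i, (i0 <= i < i0 + len)%N -> forall Q R Q' R',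
      Inv i R -> givens_run (stage i) Q R Q' R' -> Inv i.+1 R') ->
  Inv i0 R -> givens_run (flatten [seq stage i | i <- iota i0 len]) Q R Q' R' ->
  Inv (i0 + len)%N R'.
Proof.
elim: len i0 Q R => [|len IH] i0 Q R Hstage HI /=; first by case=> _ ->; rewrite addn0.
case/givens_run_cat=> Qm [Rm [run1 run2]].
rewrite -addSnnS; apply: (IH i0.+1 Qm Rm) => //.
  by move=> i Hi; apply: Hstage; lia.
by apply: (Hstage i0 _ Q R Qm) => //; lia.
Qed.

Lemma givens_run_map_ind N n (step : nat -> nat * nat * nat)
    (Inv : nat -> 'M[F]_(N, n) -> Prop) i0 len (Q Q' : 'M[F]_N) (R R' : 'M[F]_(N, n)) :
  (forall i, (i0 <= i < i0 + len)%N -> forall Q R Q' R',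
      Inv i R -> givens_step (step i).1.1 (step i).1.2 (step i).2 Q R Q' R' ->
      Inv i.+1 R') ->
  Inv i0 R -> givens_run [seq step i | i <- iota i0 len] Q R Q' R' ->
  Inv (i0 + len)%N R'.
Proof.
move=> Hstep; rewrite -flatten_map1; apply: givens_run_flatten_ind => i Hi Q1 R1 Q2 R2 HI.
by case: (step i) (Hstep i Hi Q1 R1 Q2 R2 HI) => [[p q] col] H /givens_run1 /H.
Qed.

End Steps.

Section ZeroPattern.
Variable F : comUnitRingType.
Variables n b : nat.

(* Zero patterns of R, with 0-based rows: rows r < n come from A, row n (the
   paper's row n+1) is the pivot row of the identity block, and row n + m is
   its m-th row.  In paper indices, [stage_pattern t] holds after stage t of
   Algorithm 2; during stage t+1, [stage_pattern_b t J] holds once steps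
   (a)-(b) have cleared row n+t+1 up to column J, [stage_pattern_c t] after
   step (b), and [stage_pattern_d t J] once steps (c)-(d) have cleared
   column t+1 down to row J. *)
Definition stacked_pattern (top : nat -> nat -> bool) (pivot : nat -> bool)
    (bottom : nat -> nat -> bool) (r c : nat) : bool :=
  if (r < n)%N then top r c else if r == n then pivot c else bottom (r - n)%N c.

Lemma stacked_top top pivot bottom r c :
  (r < n)%N -> stacked_pattern top pivot bottom r c = top r c.
Proof. by rewrite /stacked_pattern => ->. Qed.

Lemma stacked_pivot top pivot bottom c : stacked_pattern top pivot bottom n c = pivot c.
Proof. by rewrite /stacked_pattern ltnn eqxx. Qed.

Lemma stacked_bottom top pivot bottom r c :
  (n < r)%N -> stacked_pattern top pivot bottom r c = bottom (r - n)%N c.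
Proof. by move=> nr; rewrite /stacked_pattern ltnNge ltnW //= gtn_eqF. Qed.

Definition band_from t r c : bool := ((r < t) || [&& t <= c, r <= c + b & c <= r + b])%N.

Definition stage_pattern t := stacked_pattern (band_from t)
  (fun c => (t <= c) && (c <= t + b - 1))%N
  (fun m c => (t <= m) && (m <= c) && (c <= maxn m (t + b - 2)))%N.

Definition stage_pattern_b t J := stacked_pattern (band_from t)
  (fun c => (t <= c) && (c <= t + b - 1))%N
  (fun m c => [|| (m == t) && (J <= c) && (c <= t + b - 1),
     (t < m) && (m < J) && (m <= c) && (c <= t + b - 1) |
     (J <= m) && (m <= c) && (c <= maxn m (t + b - 2))])%N.

Definition stage_pattern_c t := stacked_pattern (band_from t)
  (fun c => (t <= c) && (c <= t + b - 1))%N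
  (fun m c => (t < m) && (m <= c) && (c <= maxn m (t + b - 1)))%N.

Definition stage_pattern_d t J := stacked_pattern
  (fun r c => [|| (r < t), (r == t) && (t <= c) && (c <= J + b - 1),
     (t < r) && (r < J) && band_from t.+1 r c | (J <= r) && band_from t r c])%N
  (fun c => (t < c) && (c <= t + b))%N
  (fun m c => (t < m) && (m <= c) && (c <= maxn m (t + b - 1)))%N.

Lemma step_a_support t (Q Q' : 'M[F]_(n + n)) (R R' : 'M[F]_(n + n, n)) :
  (1 < b)%N -> (1 <= t < n)%N -> support_in R (stage_pattern t) ->
  givens_step (n + 1) (n + t.+1) t.+1 Q R Q' R' ->
  support_in R' (stage_pattern_b t t.+1).
Proof.
move=> b_gt1 t_lt_n HR step; apply: (givens_step_support step HR);
  rewrite /stage_pattern /stage_pattern_b ?addn1 ?addnS /=.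
- move=> r c NP NQ; case: (ltngtP r n) => Hr.
  + by rewrite !stacked_top.
  + by rewrite !stacked_bottom //; lia.
  + by rewrite Hr eqxx in NP.
- by move=> c; rewrite !stacked_pivot !stacked_bottom; lia.
- by move=> c; rewrite !stacked_pivot !stacked_bottom; lia.
Qed.

Lemma step_b_support t J (Q Q' : 'M[F]_(n + n)) (R R' : 'M[F]_(n + n, n)) :
  (1 < b)%N -> (1 <= t < n)%N -> (t < J < n)%N -> (J <= t + b - 1)%N ->
  support_in R (stage_pattern_b t J) ->
  givens_step (n + J.+1) (n + t.+1) J.+1 Q R Q' R' ->
  support_in R' (stage_pattern_b t J.+1).
Proof.
move=> b_gt1 t_lt_n HJ HJb HR step; apply: (givens_step_support step HR);
  rewrite /stage_pattern_b ?addnS /=.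
- move=> r c NP NQ; case: (ltngtP r n) => Hr.
  + by rewrite !stacked_top.
  + by rewrite !stacked_bottom //; lia.
  + by rewrite Hr !stacked_pivot.
- by move=> c; rewrite !stacked_bottom; lia.
- by move=> c; rewrite !stacked_bottom; lia.
Qed.

Lemma step_c_support t (Q Q' : 'M[F]_(n + n)) (R R' : 'M[F]_(n + n, n)) :
  (1 < b)%N -> (t < n)%N -> support_in R (stage_pattern_c t) ->
  givens_step t.+1 (n + 1) t.+1 Q R Q' R' ->
  support_in R' (stage_pattern_d t t.+1).
Proof.
move=> b_gt1 t_lt_n HR step; apply: (givens_step_support step HR);
  rewrite /stage_pattern_c /stage_pattern_d ?addn1 /=.
- move=> r c NP NQ; case: (ltngtP r n) => Hr.
  + by rewrite !stacked_top // /band_from; lia.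
  + by rewrite !stacked_bottom.
  + by rewrite Hr eqxx in NQ.
- by move=> c; rewrite stacked_pivot !stacked_top // /band_from; lia.
- by move=> c; rewrite !stacked_pivot !stacked_top // /band_from; lia.
Qed.

Lemma step_d_support t J (Q Q' : 'M[F]_(n + n)) (R R' : 'M[F]_(n + n, n)) :
  (1 < b)%N -> (t < J < n)%N -> (J <= t + b)%N -> support_in R (stage_pattern_d t J) ->
  givens_step t.+1 J.+1 t.+1 Q R Q' R' ->
  support_in R' (stage_pattern_d t J.+1).
Proof.
move=> b_gt1 HJ HJb HR step; apply: (givens_step_support step HR);
  rewrite /stage_pattern_d /=.
- move=> r c NP NQ; case: (ltngtP r n) => Hr.
  + by rewrite !stacked_top // /band_from; lia.
  + by rewrite !stacked_bottom.
  + by rewrite Hr !stacked_pivot.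
- by move=> c; rewrite !stacked_top 1?/band_from; lia.
- by move=> c; rewrite !stacked_top 1?/band_from; lia.
Qed.

Lemma stage_ab_support t (Q Q' : 'M[F]_(n + n)) (R R' : 'M[F]_(n + n, n)) :
  (1 < b)%N -> (1 <= t < n)%N -> support_in R (stage_pattern t) ->
  givens_run ([:: (n + 1, n + t.+1, t.+1)]
     ++ [seq (n + j, n + t.+1, j) | j <- iota t.+2 (minn n (b + t.+1 - 1) - t.+1)])%N
     Q R Q' R' -> support_in R' (stage_pattern_c t).
Proof.
move=> b_gt1 t_lt_n HR /= [Qm [Rm [step run]]].
have step_b j : (t.+2 <= j < t.+2 + (minn n (b + t.+1 - 1) - t.+1))%N ->
    forall (Q1 : 'M[F]_(n + n)) (R1 : 'M[F]_(n + n, n)) Q2 R2,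
    support_in R1 (stage_pattern_b t j.-1) ->
    givens_step (n + j) (n + t.+1) j Q1 R1 Q2 R2 ->
    support_in R2 (stage_pattern_b t j).
  case: j => // j Hj Q1 R1 Q2 R2 /= HI st.
  by apply: (step_b_support _ _ _ _ HI st); lia.
have := givens_run_map_ind (step := fun j => (n + j, n + t.+1, j)%N)
  (Inv := fun j R => support_in R (stage_pattern_b t j.-1))
  step_b (step_a_support b_gt1 t_lt_n HR step) run.
move/support_in_sub; apply=> r c hc; rewrite /stage_pattern_b /stage_pattern_c.
case: (ltngtP r n) => Hr.
- by rewrite !stacked_top.
- by rewrite !stacked_bottom //; lia.
- by rewrite Hr !stacked_pivot.
Qed.

Lemma stage_cd_support t (Q Q' : 'M[F]_(n + n)) (R R' : 'M[F]_(n + n, n)) :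
  (1 < b)%N -> (t < n)%N -> support_in R (stage_pattern_c t) ->
  givens_run ([:: (t.+1, n + 1, t.+1)]
     ++ [seq (t.+1, j, t.+1) | j <- iota t.+2 (minn n (b + t.+1) - t.+1)])%N
     Q R Q' R' -> support_in R' (stage_pattern t.+1).
Proof.
move=> b_gt1 t_lt_n HR /= [Qm [Rm [step run]]].
have step_d j : (t.+2 <= j < t.+2 + (minn n (b + t.+1) - t.+1))%N ->
    forall (Q1 : 'M[F]_(n + n)) (R1 : 'M[F]_(n + n, n)) Q2 R2,
    support_in R1 (stage_pattern_d t j.-1) ->
    givens_step t.+1 j t.+1 Q1 R1 Q2 R2 -> support_in R2 (stage_pattern_d t j).
  case: j => // j Hj Q1 R1 Q2 R2 /= HI st.
  by apply: (step_d_support _ _ _ HI st); lia.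
have := givens_run_map_ind (step := fun j => (t.+1, j, t.+1)%N)
  (Inv := fun j R => support_in R (stage_pattern_d t j.-1))
  step_d (step_c_support b_gt1 t_lt_n HR step) run.
move/support_in_sub; apply=> r c hc; rewrite /stage_pattern_d /stage_pattern.
case: (ltngtP r n) => Hr.
- by rewrite !stacked_top // /band_from; lia.
- by rewrite !stacked_bottom //; lia.
- by rewrite Hr !stacked_pivot; lia.
Qed.

Lemma col_mx_support (A : 'M[F]_n) :
  has_bandwidth b A -> (0 < b)%N -> support_in (col_mx A 1%:M) (stage_pattern_c 0).
Proof.
move=> Ab b_gt0 r c; rewrite mxe_col_mx /stage_pattern_c /stacked_pattern mxe1.
case: (ltngtP r n) => [hr|hr|->] H.
- by apply: (mxe_band Ab); move: H; rewrite /band_from; lia.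
- by case: eqP => //= E; move: H; lia.
- by rewrite subnn; case: eqP => //= E; exfalso; move: H; lia.
Qed.

Lemma algo2_stage_support i (Q Q' : 'M[F]_(n + n)) (R R' : 'M[F]_(n + n, n)) :
  (1 < b)%N -> (1 < i <= n)%N -> support_in R (stage_pattern i.-1) ->
  givens_run (algo2_stage n b i) Q R Q' R' -> support_in R' (stage_pattern i).
Proof.
case: i => // t b_gt1 t_bounds HR.
have stageE : algo2_stage n b t.+1 =
    ([:: (n + 1, n + t.+1, t.+1)]
      ++ [seq (n + j, n + t.+1, j) | j <- iota t.+2 (minn n (b + t.+1 - 1) - t.+1)])
    ++ ([:: (t.+1, n + 1, t.+1)]
      ++ [seq (t.+1, j, t.+1) | j <- iota t.+2 (minn n (b + t.+1) - t.+1)])%N.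
  rewrite /algo2_stage -!catA; case: ifP => // tn.
  by rewrite (_ : minn n (b + t.+1) - t.+1 = 0)%N //; lia.
rewrite stageE => /givens_run_cat[Qm [Rm [ab cd]]].
apply: (stage_cd_support b_gt1 _ _ cd); first lia.
by apply: (stage_ab_support b_gt1 _ HR ab); lia.
Qed.

End ZeroPattern.

Lemma algo2_output_dsubmx (F : comUnitRingType) n b (A : 'M[F]_n)
    (Q : 'M[F]_(n + n)) (R : 'M[F]_(n + n, n)) :
  has_bandwidth b A -> (1 < b)%N -> (b < n)%N -> algo2_output b A Q R ->
  dsubmx R = 0.
Proof.
move=> Ab b_gt1 b_lt_n; rewrite /algo2_output /algo2_steps catA.
case/givens_run_cat=> Q1 [R1 [first stages]].
have after_first : support_in R1 (stage_pattern n b 1).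
  rewrite -[b.+1]addn1 in first.
  apply: (stage_cd_support b_gt1 _ (col_mx_support Ab _) first); lia.
have stage_step i : (2 <= i < 2 + (n - 1))%N ->
    forall (Qa : 'M[F]_(n + n)) (Ra : 'M[F]_(n + n, n)) Qb Rb,
    support_in Ra (stage_pattern n b i.-1) -> givens_run (algo2_stage n b i) Qa Ra Qb Rb ->
    support_in Rb (stage_pattern n b i).
  by move=> i_bounds Qa Ra Qb Rb; apply: algo2_stage_support => //; lia.
have := givens_run_flatten_ind (Inv := fun i R => support_in R (stage_pattern n b i.-1))
  stage_step after_first stages.
rewrite (_ : (2 + (n - 1)).-1 = n); last lia.
move=> Rfinal; apply/matrixP => i j; rewrite !mxE -mxeE Rfinal //=.
rewrite /stage_pattern /stacked_pattern ltnNge leq_addr /=.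
by have := ltn_ord j; case: ifP => _; lia.
Qed.

Section StackedInverse.
Variables (F : fieldType) (n : nat).
Implicit Types A Y : 'M[F]_n.

Lemma stacked_qr_factor A (Q : 'M[F]_(n + n)) (R : 'M[F]_(n + n, n)) :
  Q^T *m Q = 1%:M -> Q *m R = col_mx A 1%:M -> dsubmx R = 0 ->
  ulsubmx Q = A *m dlsubmx Q /\
  (A^T *m A + 1%:M) *m (dlsubmx Q *m (dlsubmx Q)^T) = 1%:M.
Proof.
move=> QtQ QR R2_0.
set Q1 := ulsubmx Q; set Q2 := dlsubmx Q; set R1 := usubmx R.
have EQ : Q = block_mx Q1 (ursubmx Q) Q2 (drsubmx Q) by rewrite submxK.
move: QR; rewrite -(vsubmxK R) R2_0 EQ mul_block_col !mulmx0 !addr0.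
case/eq_col_mx=> Q1R1 Q2R1.
move: QtQ; rewrite EQ tr_block_mx mulmx_block (scalar_mx_block n n 1).
case/eq_block_mx=> Q1tQ1 _ _ _.
have R1Q2 : R1 *m Q2 = 1%:M by apply: mulmx1C.
split; first by rewrite -Q1R1 -mulmxA R1Q2 mulmx1.
have sq X : R1^T *m X^T *m X *m R1 = (X *m R1)^T *m (X *m R1).
  by rewrite trmx_mul !mulmxA.
have R1tR1 : R1^T *m R1 = A^T *m A + 1%:M.
  rewrite -{1}(mulmx1 R1^T) -{1}Q1tQ1 mulmxDr mulmxDl !mulmxA !sq.
  by rewrite Q1R1 Q2R1 trmx1 mulmx1.
by rewrite -R1tR1 -mulmxA (mulmxA R1) R1Q2 mul1mx -trmx_mul Q2R1 trmx1.
Qed.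

Lemma block_mx_inverse A Y : (A *m A + 1%:M) *m Y = 1%:M ->
  block_mx A (- 1%:M) 1%:M A *m block_mx (A *m Y) Y (- Y) (A *m Y) = 1%:M.
Proof.
move=> AAY.
have ul : A *m (A *m Y) + - 1%:M *m - Y = 1%:M.
  by rewrite mulNmx mulmxN opprK mul1mx mulmxA -AAY mulmxDl mul1mx.
have ur : A *m Y + - 1%:M *m (A *m Y) = 0 by rewrite mulNmx mul1mx addrN.
have dl : 1%:M *m (A *m Y) + A *m - Y = 0 by rewrite mul1mx mulmxN addrN.
have dr : 1%:M *m Y + A *m (A *m Y) = 1%:M.
  by rewrite mul1mx mulmxA -AAY mulmxDl mul1mx addrC.
by rewrite mulmx_block ul ur dl dr -scalar_mx_block.
Qed.

Lemma mulmx_inverse_sym A Y : A^T = A -> (A *m A + 1%:M) *m Y = 1%:M ->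
  (A *m Y)^T = A *m Y.
Proof.
move=> At AAY; have YAA := mulmx1C AAY.
have AA1t : (A *m A + 1%:M)^T = A *m A + 1%:M by rewrite raddfD /= trmx_mul At trmx1.
have Yt : Y^T = Y.
  by rewrite -[Y^T]mulmx1 -AAY mulmxA -AA1t -trmx_mul AAY trmx1 mul1mx.
have AA1_comm : A *m (A *m A + 1%:M) = (A *m A + 1%:M) *m A.
  by rewrite mulmxDr mulmxDl mulmx1 mul1mx mulmxA.
rewrite trmx_mul Yt At -{1}[Y *m A]mulmx1 -AAY !mulmxA -(mulmxA Y A) AA1_comm.
by rewrite mulmxA YAA mul1mx.
Qed.

End StackedInverse.

Section RankInverse.
Variable F : fieldType.

Lemma rank_mxsub_le m n p q (f : 'I_p -> 'I_m) (g : 'I_q -> 'I_n) (M : 'M[F]_(m, n)) :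
  (\rank (mxsub f g M) <= \rank M)%N.
Proof.
rewrite mxsubrc; apply: leq_trans (mxrankS (rowsub_sub _ _)) _.
by rewrite -mxrank_tr trmx_mxsub -(mxrank_tr M) mxrankS // rowsub_sub.
Qed.

(* One half of the nullity theorem: E1, E2 select complementary sets of
   coordinates, and a left kernel vector of the corner of M, multiplied by the
   diagonal block of M, lies in the left kernel of the corner of M'. *)
Lemma rank_corner_inverse N p q (M M' : 'M[F]_N) (E1 : 'M[F]_(p, N)) (E2 : 'M[F]_(q, N)) :
  M *m M' = 1%:M -> E1^T *m E1 + E2^T *m E2 = 1%:M -> E1 *m E1^T = 1%:M ->
  E1 *m E2^T = 0 ->
  (\rank (E1 *m M' *m E2^T) <= \rank (E1 *m M *m E2^T))%N.
Proof.
move=> MM' E_id E11 E12.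
set M11 := E1 *m M *m E1^T; set M12 := E1 *m M *m E2^T.
set M'11 := E1 *m M' *m E1^T; set M'12 := E1 *m M' *m E2^T.
have blockE k (X : 'M[F]_(N, k)) :
    M11 *m (E1 *m M' *m X) + M12 *m (E2 *m M' *m X) = E1 *m X.
  have -> : E1 *m X = E1 *m M *m (E1^T *m E1 + E2^T *m E2) *m M' *m X.
    by rewrite E_id mulmx1 -(mulmxA E1) MM' mulmx1.
  by rewrite mulmxDr !mulmxDl /M11 /M12 !mulmxA.
set K := kermx M12.
have KM12 : K *m M12 = 0 by exact: mulmx_ker.
have KM11 k (X : 'M[F]_(N, k)) : K *m M11 *m (E1 *m M' *m X) = K *m (E1 *m X).
  by rewrite -(blockE _ X) mulmxDr (mulmxA K M12) KM12 mul0mx addr0 !mulmxA.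
have K_ker : (K *m M11 <= kermx M'12)%MS.
  by apply/sub_kermxP; rewrite KM11 E12 mulmx0.
have K_rank : (\rank K <= \rank (K *m M11))%N.
  by rewrite -{1}(mulmx1 K) -E11 -KM11 mxrankM_maxl.
move: (mxrankS K_ker) K_rank; rewrite !mxrank_ker.
by have := rank_leq_row M12; have := rank_leq_row M'12; lia.
Qed.

Lemma sum_indicator_codom m r (h : 'I_r -> 'I_m) (G : 'I_m -> F) a : injective h ->
  \sum_l (h l == a)%:R * G (h l) = if a \in codom h then G a else 0.
Proof.
move=> h_inj; case: ifP => [/codomP [l0 ->]|Na].
  rewrite (bigD1 l0) //= eqxx mul1r big1 ?addr0 // => l Hl.
  by rewrite (inj_eq h_inj) (negbTE Hl) mul0r.
rewrite big1 // => l _; case: eqP => [E|_]; last by rewrite mul0r.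
by rewrite -E codom_f in Na.
Qed.

Lemma rank_mxsub_inverse N p q (M M' : 'M[F]_N) (f : 'I_p -> 'I_N) (g : 'I_q -> 'I_N) :
  M *m M' = 1%:M -> injective f -> injective g ->
  (forall a, (a \in codom f) = (a \notin codom g)) ->
  (\rank (mxsub f g M') <= \rank (mxsub f g M))%N.
Proof.
move=> MM' f_inj g_inj fg.
set E1 := rowsub f (1%:M : 'M[F]_N); set E2 := rowsub g (1%:M : 'M[F]_N).
have mxsubE X : mxsub f g X = E1 *m X *m E2^T.
  have E2t : E2^T = colsub g (1%:M : 'M[F]_N).
    by apply/matrixP => i j; rewrite !mxE eq_sym.
  rewrite mxsubrc rowsubE E2t -[X in colsub g X](mulmx1 X).
  by rewrite mxsub_mul mxsub_id mulmxA.
rewrite !mxsubE; apply: rank_corner_inverse => //.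
- apply/matrixP => a c; rewrite !mxE.
  rewrite (eq_bigr (fun l => (f l == a)%:R * (f l == c)%:R)); last by move=> l _; rewrite !mxE.
  rewrite (eq_bigr (fun l => (g l == a)%:R * (g l == c)%:R)); last by move=> l _; rewrite !mxE.
  rewrite (sum_indicator_codom (fun x => (x == c)%:R)) //.
  rewrite (sum_indicator_codom (fun x => (x == c)%:R)) // fg.
  by case: (a \in codom g); rewrite ?add0r ?addr0.
- apply/matrixP => i j; rewrite !mxE.
  rewrite (eq_bigr (fun k => (f i == k)%:R * (f j == k)%:R)); last by move=> k _; rewrite !mxE.
  rewrite (bigD1 (f j)) //= eqxx mulr1 big1 ?addr0; first by rewrite (inj_eq f_inj).
  by move=> k Hk; rewrite [f j == k]eq_sym (negbTE Hk) mulr0.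
- apply/matrixP => i j; rewrite !mxE big1 // => k _; rewrite !mxE.
  case: (eqVneq (f i) k) => [<-|]; last by rewrite mul0r.
  case: (eqVneq (g j) (f i)) => [E|]; last by rewrite mulr0.
  by have := codom_f f i; rewrite fg -E codom_f.
Qed.

End RankInverse.

Lemma offset_ord_lt o p m (h : (o + p <= m)%N) (i : 'I_p) : (o + i < m)%N.
Proof. by apply: leq_trans h; rewrite ltn_add2l. Qed.

Definition offset_ord o p m (h : (o + p <= m)%N) (i : 'I_p) : 'I_m :=
  Ordinal (offset_ord_lt h i).

Lemma offset_ord_inj o p m (h : (o + p <= m)%N) : injective (offset_ord h).
Proof. by move=> i j /(congr1 val) /= /addnI /val_inj. Qed.

Lemma codom_offset_ord o p m (h : (o + p <= m)%N) (a : 'I_m) :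
  (a \in codom (offset_ord h)) = (o <= a < o + p)%N.
Proof.
apply/codomP/idP => [[i ->] /=|/andP[oa ap]]; first by rewrite leq_addr ltn_add2l ltn_ord.
have ha : (a - o < p)%N by lia.
by exists (Ordinal ha); apply: val_inj => /=; lia.
Qed.

Lemma subblock_mxsub (F : nmodType) m n (M : 'M[F]_(m, n)) a b c d
    (hr : (a - 1 + (b - a + 1) <= m)%N) (hc : (c - 1 + (d - c + 1) <= n)%N) :
  subblock M a b c d = mxsub (offset_ord hr) (offset_ord hc) M.
Proof. by apply/matrixP => i j; rewrite !mxE -mxeE. Qed.

Lemma subblock_trmx (F : nmodType) m n (M : 'M[F]_(m, n)) a b c d :
  subblock M^T a b c d = (subblock M c d a b)^T.
Proof. by apply/matrixP => i j; rewrite !mxE mxe_tr. Qed.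

Section DoubledIndex.
Variable n : nat.

Definition dup_ord p (u : 'I_p -> 'I_n) (i : 'I_(p + p)) : 'I_(n + n) :=
  match split i with inl a => lshift n (u a) | inr a => rshift n (u a) end.

Lemma dup_ord_lshift p (u : 'I_p -> 'I_n) x : dup_ord u (lshift p x) = lshift n (u x).
Proof. by rewrite /dup_ord (unsplitK (inl _ x)). Qed.

Lemma dup_ord_rshift p (u : 'I_p -> 'I_n) x : dup_ord u (rshift p x) = rshift n (u x).
Proof. by rewrite /dup_ord (unsplitK (inr _ x)). Qed.

Lemma dup_ord_inj p (u : 'I_p -> 'I_n) : injective u -> injective (dup_ord u).
Proof.
move=> u_inj i j; case: (split_ordP i) => x ->; case: (split_ordP j) => y ->;
  rewrite ?dup_ord_lshift ?dup_ord_rshift.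
- by move/lshift_inj/u_inj->.
- by move/(congr1 val) => /=; have := ltn_ord (u x); lia.
- by move/(congr1 val) => /=; have := ltn_ord (u y); lia.
- by move/rshift_inj/u_inj->.
Qed.

Lemma codom_dup_ord_lshift p (u : 'I_p -> 'I_n) (x : 'I_n) :
  (lshift n x \in codom (dup_ord u)) = (x \in codom u).
Proof.
apply/codomP/codomP => [[i]|[y ->]]; last by exists (lshift p y); rewrite dup_ord_lshift.
case: (split_ordP i) => y ->; rewrite ?dup_ord_lshift ?dup_ord_rshift.
  by move/lshift_inj->; exists y.
by move/(congr1 val) => /=; have := ltn_ord x; lia.
Qed.

Lemma codom_dup_ord_rshift p (u : 'I_p -> 'I_n) (x : 'I_n) :
  (rshift n x \in codom (dup_ord u)) = (x \in codom u).
Proof.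
apply/codomP/codomP => [[i]|[y ->]]; last by exists (rshift p y); rewrite dup_ord_rshift.
case: (split_ordP i) => y ->; rewrite ?dup_ord_lshift ?dup_ord_rshift.
  by move/(congr1 val) => /=; have := ltn_ord (u y); lia.
by move/rshift_inj->; exists y.
Qed.

Lemma codom_dup_ordC p q (u : 'I_p -> 'I_n) (v : 'I_q -> 'I_n) :
  (forall a, (a \in codom u) = (a \notin codom v)) ->
  forall a, (a \in codom (dup_ord u)) = (a \notin codom (dup_ord v)).
Proof.
move=> uv a; case: (split_ordP a) => x ->.
  by rewrite !codom_dup_ord_lshift.
by rewrite !codom_dup_ord_rshift.
Qed.

Lemma mxsub_dup_block_mx (F : Type) p q (u : 'I_p -> 'I_n) (v : 'I_q -> 'I_n) (A B C D : 'M[F]_n) :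
  mxsub (dup_ord u) (dup_ord v) (block_mx A B C D) =
  block_mx (mxsub u v A) (mxsub u v B) (mxsub u v C) (mxsub u v D).
Proof.
apply/matrixP => i j; rewrite mxE.
case: (split_ordP i) => x ->; case: (split_ordP j) => y ->;
  rewrite ?dup_ord_lshift ?dup_ord_rshift;
  by rewrite ?block_mxEul ?block_mxEur ?block_mxEdl ?block_mxEdr mxE.
Qed.

End DoubledIndex.

Lemma rank_le_zero_rows (F : fieldType) m n s (M : 'M[F]_(m, n)) :
  (s <= m)%N -> (forall (i : 'I_m) j, (i < s)%N -> M i j = 0) -> (\rank M <= m - s)%N.
Proof.
move=> sm M0; have hs : (s + (m - s) <= m)%N by rewrite subnKC.
apply: leq_trans (rank_leq_row (rowsub (offset_ord hs) M)).
apply/mxrankS/row_subP => i; case: (ltnP i s) => [i_lt_s|s_le_i].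
  by rewrite (_ : row i M = 0) ?sub0mx //; apply/rowP => j; rewrite !mxE M0.
have hi : (i - s < m - s)%N by have := ltn_ord i; lia.
rewrite (_ : row i M = row (Ordinal hi) (rowsub (offset_ord hs) M)) ?row_sub //.
by rewrite row_rowsub; congr row; apply: val_inj => /=; lia.
Qed.

Lemma rank_offdiag_band (F : fieldType) n b (A : 'M[F]_n) o p o' q
    (hr : (o + p <= n)%N) (hc : (o' + q <= n)%N) :
  has_bandwidth b A -> (o + p <= o')%N ->
  (\rank (mxsub (offset_ord hr) (offset_ord hc) A) <= b)%N.
Proof.
move=> Ab opo; apply: leq_trans (rank_le_zero_rows (s := p - b) _ _) _.
- exact: leq_subr.
- by move=> i j ib; rewrite mxE -mxeE (mxe_band Ab) //=; lia.
- lia.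
Qed.

Lemma rank_offdiag_subblock_inverse (F : fieldType) n b (A X Y : 'M[F]_n) k :
  has_bandwidth b A -> block_mx A (- 1%:M) 1%:M A *m block_mx X Y (- Y) X = 1%:M ->
  (1 <= k < n)%N -> (\rank (subblock X 1 k k.+1 n) <= 2 * b)%N.
Proof.
move=> Ab inv kn.
have hr : (1 - 1 + (k - 1 + 1) <= n)%N by lia.
have hc : (k.+1 - 1 + (n - k.+1 + 1) <= n)%N by lia.
set u := offset_ord hr; set v := offset_ord hc.
have uv a : (a \in codom u) = (a \notin codom v).
  by rewrite !codom_offset_ord; have := ltn_ord a; lia.
have uv1 : mxsub u v (1%:M : 'M[F]_n) = 0.
  apply/matrixP => i j; rewrite !mxE; case: eqP => // /(congr1 val) /= E.
  by exfalso; have := ltn_ord i; lia.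
rewrite (subblock_mxsub X hr hc) -/u -/v.
have -> : mxsub u v X = ulsubmx (mxsub (dup_ord u) (dup_ord v) (block_mx X Y (- Y) X)).
  by rewrite mxsub_dup_block_mx block_mxKul.
rewrite ulsubmxEsub; apply: leq_trans (rank_mxsub_le _ _ _) _.
have u_inj : injective u by exact: offset_ord_inj.
have v_inj : injective v by exact: offset_ord_inj.
apply: leq_trans (rank_mxsub_inverse inv (dup_ord_inj u_inj) (dup_ord_inj v_inj)
  (codom_dup_ordC uv)) _.
rewrite mxsub_dup_block_mx raddfN /= uv1 oppr0 rank_diag_block_mx.
have rows_before_cols : (1 - 1 + (k - 1 + 1) <= k.+1 - 1)%N by lia.
have := rank_offdiag_band hr hc Ab rows_before_cols.
by rewrite -/u -/v; lia.
Qed.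

Theorem theorem4p4 (F : rcfType) (n b : nat) (A : 'M[F]_n)
    (Q : 'M[F]_(n + n)) (R : 'M[F]_(n + n, n)) :
  A^T = A -> has_bandwidth b A -> (1 < b)%N -> (b < n)%N ->
  algo2_output b A Q R ->
  let Q1 := ulsubmx Q in
  let Q2 := dlsubmx Q in
  forall k : nat, (1 <= k)%N -> (k < n)%N ->
    (\rank (subblock (Q1 *m Q2^T) 1 k k.+1 n) <= 2 * b)%N /\
    (\rank (subblock (Q1 *m Q2^T) k.+1 n 1 k) <= 2 * b)%N.
Proof.
move=> At Ab b_gt1 b_lt_n alg Q1 Q2 k k_gt0 k_lt_n.
have QR : Q *m R = col_mx A 1%:M by rewrite (givens_run_mulmx alg) mul1mx.
have QtQ : Q^T *m Q = 1%:M by rewrite (givens_run_orthogonal alg) // trmx1 mulmx1.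
have [Q1E AAY] := stacked_qr_factor QtQ QR (algo2_output_dsubmx Ab b_gt1 b_lt_n alg).
rewrite At in AAY.
have -> : Q1 *m Q2^T = A *m (Q2 *m Q2^T) by rewrite /Q1 Q1E -mulmxA.
have inv := block_mx_inverse AAY.
have k_bounds : (1 <= k < n)%N by rewrite k_gt0.
split; first exact: rank_offdiag_subblock_inverse Ab inv k_bounds.
rewrite -(mulmx_inverse_sym At AAY) subblock_trmx mxrank_tr.
exact: rank_offdiag_subblock_inverse Ab inv k_bounds.
Qed.
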